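(* Let $X$ be a totally disconnected compact metric space and $(X,\alpha,\mathbb{Z}^+)$ a dynamical system given by a continuous surjection $\alpha:X\to X$. If the system admits a forward Li-Yorke pair, then the Ellis semigroup $E(X,\mathbb{Z}^+)$ is not completely regular.
   Context: $E(X,\mathbb{Z}^+)$ is the closure of $\{\alpha^n:n\ge 0\}$ in $X^X$ (maps $X\to X$, pointwise convergence topology, composition as product). A semigroup is completely regular if for every element $a$ there exists $x$ with $a=axa$ and $ax=xa$. A pair $x,y\in X$ is a forward Li-Yorke pair if it is forward proximal, i.e. $\inf_{n\ge0}d(\alpha^nx,\alpha^ny)=0$, but not forward asymptotic, i.e. not $\lim_{n\to+\infty}d(\alpha^nx,\alpha^ny)=0$. *)

From HB Require Import structures.
From mathcomp Require Import all_boot all_order all_algebra.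
From mathcomp Require Import all_classical all_reals all_analysis.
Set Implicit Arguments. Unset Strict Implicit. Unset Printing Implicit Defensive.
Import Order.TTheory GRing.Theory Num.Theory.
Local Open Scope classical_set_scope.
Local Open Scope ring_scope.

Definition ellis_semigroup (X : topologicalType) (alpha : X -> X)
  : set {ptws X -> X} :=
  closure (range (fun n : nat => (iter n alpha : {ptws X -> X}))).

Definition completely_regular (X : Type) (S : set (X -> X)) :=
  forall a, S a -> exists2 x, S x & a = a \o x \o a /\ a \o x = x \o a.

Definition forward_proximal (R : realType) (X : metricType R) (alpha : X -> X)
  (x y : X) :=
  inf [set mdist (iter n alpha x) (iter n alpha y) | n in [set: nat]] = 0.

Definition forward_asymptotic (R : realType) (X : metricType R) (alpha : X -> X)
  (x y : X) :=
  (fun n : nat => mdist (iter n alpha x) (iter n alpha y)) @ \oo --> (0 : R^o).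

Definition forward_LiYorke_pair (R : realType) (X : metricType R)
  (alpha : X -> X) (x y : X) :=
  forward_proximal alpha x y /\ ~ forward_asymptotic alpha x y.

(* If E(X, Z^+) is completely regular, an element beta of E with
   alpha = alpha beta alpha and alpha beta = beta alpha is, by surjectivity of
   alpha, a two-sided inverse of alpha; so alpha^-1 is a pointwise limit of
   forward iterates.
   Separate the Li-Yorke pair x <> y by a clopen set U (X is zero-dimensional).
   Since beta (alpha w) = w is approximated by alpha^(n+1) w, two points that
   are on the same side of U at every positive time are on the same side at
   time 0, and by compactness the times 1..L suffice for a uniform L.
   Proximality gives an n for which alpha^n x and alpha^n y are so close that
   they stay on the same side of U for L more steps; descending one time step
   at a time, x and y are then on the same side of U, a contradiction. *)

From HB Require Import structures.
From mathcomp Require Import all_boot all_order all_algebra.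
From mathcomp Require Import all_classical all_reals all_analysis.
From mathcomp Require Import lra.
Import Order.TTheory GRing.Theory Num.Theory.
Set Implicit Arguments. Unset Strict Implicit. Unset Printing Implicit Defensive.
Local Open Scope classical_set_scope.

Lemma compact_filter_base_cluster (T : topologicalType) (I : Type) (D : set I)
    (B : I -> set T) :
  compact [set: T] -> D !=set0 ->
  (forall i j, D i -> D j -> exists2 k, D k & B k `<=` B i `&` B j) ->
  (forall i, D i -> B i !=set0) ->
  exists p : T, forall i A, D i -> nbhs p A -> B i `&` A !=set0.
Proof.
move=> cT [i0 Di0] Bdir Bn0.
have Bfilter := filter_from_filter (ex_intro _ i0 Di0) Bdir.
have [p [_ clp]] := cT _ (filter_from_proper Bfilter Bn0) filterT.
by exists p => i A Di pA; apply: clp => //; exists i.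
Qed.

Definition quasi_component (T : topologicalType) (x : T) : set T :=
  \bigcap_(C in [set C : set T | clopen C /\ C x]) C.

Lemma quasi_component_refl (T : topologicalType) (x : T) : quasi_component x x.
Proof. by move=> C []. Qed.

Lemma closed_quasi_component (T : topologicalType) (x : T) :
  closed (quasi_component x).
Proof. by apply: closed_bigI => C [[]]. Qed.

Lemma quasi_component_sub_clopen (T : topologicalType) (x : T) (W : set T) :
  compact [set: T] -> open W -> quasi_component x `<=` W ->
  exists C, [/\ clopen C, C x & C `<=` W].
Proof.
move=> cT oW QW; apply: contrapT => noC.
pose D := [set C : set T | clopen C /\ C x].
have [|C1 C2 [cC1 C1x] [cC2 C2x]||z clz] :=
    @compact_filter_base_cluster T _ D (fun C => C `\` W) cT.
- by exists setT; split => //; exact: clopenT.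
- by exists (C1 `&` C2); [split; [exact: clopenI|] | move=> w [[]]].
- move=> C [cC Cx]; apply: contrapT => /set0P/negP/negPn/eqP; rewrite setD_eq0 => CW.
  by apply: noC; exists C.
have nWz : ~ W z.
  move=> Wz; have [w [[_ nWw] Ww]] := clz setT W (conj clopenT I)
    (open_nbhs_nbhs (conj oW Wz)).
  exact: nWw.
apply/nWz/QW => C [cC Cx]; apply: contrapT => nCz.
have [w [[Cw _] nCw]] := clz C (~` C) (conj cC Cx)
  (open_nbhs_nbhs (conj (closed_openC cC.2) nCz)).
exact: nCw.
Qed.

Section pseudometric_quasi_component.
Context {R : realType} {T : pseudoMetricType R}.
Hypothesis compactT : compact [set: T].

Lemma quasi_component_split (x : T) (A B : set T) :
  closed A -> closed B -> A `&` B = set0 ->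
  quasi_component x = A `|` B -> A x -> B = set0.
Proof.
move=> cA cB AB0 QAB Ax.
have [U [V [oU oV AU BV UV0]]] :=
  (@normal_openP R T).1 pseudometric_normal A B cA cB AB0.
have [|C [cC Cx CUV]] := @quasi_component_sub_clopen _ x _ compactT (openU oU oV).
  by rewrite QAB => w [/AU|/BV] ?; [left|right].
have CU_clopen : clopen (C `&` U).
  split; first exact: openI cC.1 oU.
  have -> : C `&` U = C `&` ~` V.
    apply/seteqP; split=> w [Cw UVw]; split=> //.
      by move=> Vw; rewrite -[False]/(set0 w) -UV0.
    by case: (CUV _ Cw).
  exact: closedI cC.2 (open_closedC oV).
apply/seteqP; split=> // b Bb.
have Qb : quasi_component x b by rewrite QAB; right.
have [_ Ub] := Qb _ (conj CU_clopen (conj Cx (AU _ Ax))).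
by rewrite -UV0; split=> //; exact: BV.
Qed.

Lemma quasi_component_connected (x : T) : connected (quasi_component x).
Proof.
apply/connectedP => E [E_n0 QE [clE0E1 E0clE1]].
have closedE b : closed (E b).
  rewrite closure_id; apply/seteqP; split; first exact: subset_closure.
  move=> w Ew.
  have EQ : E b `<=` quasi_component x by rewrite QE; case: {Ew} b => z Ez; [right|left].
  have := closureS EQ Ew; move/closure_id : (@closed_quasi_component _ x) => <-.
  rewrite QE => -[E0w|E1w]; case: b {EQ} Ew => // Ew.
  - by have : set0 w by rewrite -E0clE1.
  - by have : set0 w by rewrite -clE0E1.
have [b Ebx] : exists b, E b x.
  by have := @quasi_component_refl _ x; rewrite QE => -[]; [exists false | exists true].
have E0E1 : E false `&` E true = set0.
  by apply: separated_disjoint; split.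
have E_empty : E (~~ b) = set0.
  apply: (quasi_component_split (closedE b) (closedE (~~ b))) Ebx.
  - by case: b => /=; rewrite // setIC.
  - by case: b => /=; rewrite QE // setUC.
by have [w] := E_n0 (~~ b); rewrite E_empty.
Qed.

Lemma compact_totally_disconnected_zero_dimensional :
  totally_disconnected [set: T] -> zero_dimensional T.
Proof.
move=> tdT x y xy; apply: contrapT => noU.
have Qy : quasi_component x y.
  by move=> C [cC Cx]; apply: contrapT => nCy; apply: noU; exists C.
have : connected_component [set: T] x y.
  by exists (quasi_component x) => //; split;
    [exact: quasi_component_refl | | exact: quasi_component_connected].
by rewrite tdT // => yx; rewrite yx eqxx in xy.
Qed.

End pseudometric_quasi_component.

Lemma continuous_iter (T : topologicalType) (f : T -> T) (k : nat) :
  continuous f -> continuous (iter k f).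
Proof.
move=> cf; elim: k => [|k IHk] x /=; first exact: cvg_id.
exact: continuous_comp (IHk x) (cf _).
Qed.

Definition same_side (Y T : Type) (U : set T) (f : Y -> T) (a b : Y) :=
  U (f a) <-> U (f b).

Section same_side_topology.
Context {Y T : topologicalType} (U : set T) (f : Y -> T).
Hypotheses (clopenU : clopen U) (cf : continuous f).

Lemma nbhs_same_side (u : Y) : \forall a \near u, same_side U f a u.
Proof.
have [Ufu|nUfu] := pselect (U (f u)).
  have : \forall a \near u, U (f a).
    by apply: cf; apply: open_nbhs_nbhs; split => //; exact: clopenU.1.
  by apply: filterS => a Ufa; split.
have : \forall a \near u, (~` U) (f a).
  by apply: cf; apply: open_nbhs_nbhs; split => //; exact: closed_openC clopenU.2.
by apply: filterS => a nUfa; split.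
Qed.

Lemma near_same_side (u v : Y) :
  \forall p \near (u, v), same_side U f p.1 p.2 <-> same_side U f u v.
Proof.
exists (same_side U f^~ u, same_side U f^~ v); first by split; exact: nbhs_same_side.
by case=> a b [/= au bv]; rewrite /same_side in au bv *; tauto.
Qed.

End same_side_topology.

Section ellis_inverse.
Context {X : topologicalType} (alpha beta : X -> X) (U : set X).
Hypotheses (alpha_cont : continuous alpha) (clopenU : clopen U).
Hypotheses (beta_ellis : ellis_semigroup alpha beta) (alphaK : cancel alpha beta).

Let same_side_iter k := same_side U (iter k alpha).

Lemma ellis_inverse_same_side (u v : X) :
  (forall k, (0 < k)%N -> same_side_iter k u v) -> same_side U id u v.
Proof.
move=> future.
have near_beta (w : X) : nbhs (beta : {ptws X -> X})
    [set g : {ptws X -> X} | same_side U id (g (alpha w)) w].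
  have near_w : nbhs (beta (alpha w)) (same_side U id ^~ w).
    by rewrite alphaK; exact: (nbhs_same_side clopenU (fun _ => cvg_id)).
  exact: (@proj_continuous X (fun _ => X) (alpha w) beta _ near_w).
have [_ [[n _ <-] [nu nv]]] := beta_ellis (filterI (near_beta u) (near_beta v)).
have := future n.+1 isT; move: nu nv.
by rewrite /same_side_iter /same_side !iterSr /=; tauto.
Qed.

Lemma ellis_inverse_same_side_uniform : compact [set: X] ->
  exists L, forall u v, (forall k, (0 < k <= L)%N -> same_side_iter k u v) ->
    same_side U id u v.
Proof.
move=> cX; apply: contrapT => noL.
pose B L := [set p : X * X | ~ same_side U id p.1 p.2 /\
  forall k, (0 < k <= L)%N -> same_side_iter k p.1 p.2].
have cXX : compact [set: X * X] by rewrite -setXTT; exact: compact_setX.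
have [||L|[u v] cluster] := @compact_filter_base_cluster _ _ setT B cXX.
- by exists 0%N.
- move=> i j _ _; exists (maxn i j) => // p [nUp Bp].
  by split; split=> // k /andP[k0 kL]; apply: Bp;
    rewrite k0 (leq_trans kL) // ?leq_maxl ?leq_maxr.
- move=> _; apply: contrapT => noB; apply: noL; exists L => u v Buv.
  by apply: contrapT => nUuv; apply: noB; exists (u, v).
have near_uv k := cluster k _ I
  (near_same_side clopenU (continuous_iter (k := k) alpha_cont) u v).
have [[a b] [[nab _] ab_uv]] := near_uv 0%N.
apply: nab; apply/ab_uv; apply: ellis_inverse_same_side => k k0.
have [[a' b'] [[_ Bab'] ab_uv']] := near_uv k.
by apply/ab_uv'; apply: Bab'; rewrite k0 leqnn.
Qed.

End ellis_inverse.

Lemma same_side_iter_window (X : Type) (alpha : X -> X) (U : set X) (L m : nat)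
    (u v : X) :
  (forall u v, (forall k, (0 < k <= L)%N -> same_side U (iter k alpha) u v) ->
    same_side U id u v) ->
  (forall i, (i <= L)%N -> same_side U (iter (i + m) alpha) u v) ->
  same_side U id u v.
Proof.
move=> determined; elim: m => [|m IHm] window; first exact: (window 0%N (leq0n L)).
apply: IHm => -[_|i iL]; last by rewrite addSnnS; apply: window; exact: ltnW.
apply: (determined (iter m alpha u)) => -[//|k] /andP[_ kL].
by rewrite /same_side -!iterD addSnnS; apply: window; exact: ltnW.
Qed.

Lemma nbhs_diagonal_same_side_upto (X : topologicalType) (alpha : X -> X)
    (U : set X) (L : nat) (u : X) :
  continuous alpha -> clopen U ->
  nbhs (u, u) [set p | forall k, (k <= L)%N -> same_side U (iter k alpha) p.1 p.2].
Proof.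
move=> alpha_cont clopenU.
have : nbhs (u, u) [set p | forall k : 'I_L.+1,
    same_side U (iter k alpha) p.1 p.2].
  apply: (filter_forall (F := nbhs (u, u))) => k.
  have := near_same_side clopenU (continuous_iter (k := k) alpha_cont) u u.
  by apply: filterS => p ->.
by apply: filterS => p near_p k kL; have := near_p (@Ordinal L.+1 k kL).
Qed.

Local Open Scope ring_scope.

Lemma compact_nbhs_diagonal_mdist {R : realType} {X : metricType R}
    (W : set (X * X)) :
  compact [set: X] -> (forall u : X, nbhs (u, u) W) ->
  exists2 r : R, 0 < r & forall a b, mdist a b < r -> W (a, b).
Proof.
move=> cX W_diag; apply: contrapT => noR.
pose B (r : R) := [set p : X * X | mdist p.1 p.2 < r /\ ~ W p].
have cXX : compact [set: X * X] by rewrite -setXTT; exact: compact_setX.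
have [||r r0|[u v] cluster] :=
    @compact_filter_base_cluster _ _ [set r : R | 0 < r] B cXX.
- by exists 1; rewrite /= ltr01.
- move=> i j /= i0 j0; exists (Num.min i j); first by rewrite /= lt_min i0 j0.
  by move=> p [+ nWp]; rewrite lt_min => /andP[? ?]; split; split.
- apply: contrapT => noB; apply: noR; exists r => // a b ab.
  by apply: contrapT => nWab; apply: noB; exists (a, b).
have uv : u = v.
  apply: contrapT => /eqP uv; pose e := mdist u v / 3.
  have e0 : 0 < e by rewrite divr_gt0 // mdist_gt0.
  have near_uv : nbhs (u, v) (ball u e `*` ball v e).
    by exists (ball u e, ball v e) => //; split; exact: nbhsx_ballx.
  have [[a b] [[/= ab _] [/= ua vb]]] := cluster e _ e0 near_uv.
  move: ua vb; rewrite !ballEmdist /= (metric_sym v b) => ua bv.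
  have := metric_triangle u a v; have := metric_triangle a b v.
  rewrite /e in ab ua bv; lra.
subst v; have [p [[_ nWp] Wp]] := cluster 1 _ ltr01 (W_diag u).
exact: nWp.
Qed.

Lemma forward_proximal_lt {R : realType} {X : metricType R} (alpha : X -> X)
    (x y : X) (r : R) :
  forward_proximal alpha x y -> 0 < r ->
  exists n, mdist (iter n alpha x) (iter n alpha y) < r.
Proof.
move=> prox r0.
have dist_n0 : [set mdist (iter n alpha x) (iter n alpha y) | n in [set: nat]] !=set0.
  by exists (mdist x y), 0%N.
by have := inf_lt dist_n0; rewrite prox => /(_ _ r0) [_ [n _ <-] dn]; exists n.
Qed.

Lemma forward_asymptoticxx {R : realType} {X : metricType R} (alpha : X -> X)
    (x : X) : forward_asymptotic alpha x x.
Proof.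
rewrite /forward_asymptotic; under eq_fun do rewrite mdistxx.
exact: (cvg_cst (0 : R^o)).
Qed.

Lemma completely_regular_left_inverse (X : Type) (S : set (X -> X))
    (a : X -> X) :
  completely_regular S -> S a -> (forall y, exists x, a x = y) ->
  exists2 b, S b & cancel a b.
Proof.
move=> CR Sa a_surj; have [b Sb [aba ab_ba]] := CR a Sa.
have abK : cancel b a.
  by move=> y; have [x <-] := a_surj y; exact: (esym (congr1 (fun f => f x) aba)).
by exists b => // x; rewrite -[b (a x)]/((b \o a) x) -ab_ba /= abK.
Qed.

Theorem proposition4p11 (R : realType) (X : metricType R) (alpha : X -> X) :
  compact [set: X] ->
  totally_disconnected [set: X] ->
  continuous alpha ->
  (forall y : X, exists x : X, alpha x = y) ->
  (exists x y : X, forward_LiYorke_pair alpha x y) ->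
  ~ completely_regular (ellis_semigroup alpha).
Proof.
move=> cX tdX alpha_cont alpha_surj [x [y [prox not_asym]]] CR.
have alpha_ellis : ellis_semigroup alpha alpha.
  by apply: subset_closure; exists 1%N.
have [beta beta_ellis alphaK] :=
  completely_regular_left_inverse CR alpha_ellis alpha_surj.
have xy : x != y.
  by apply: contra_notN not_asym => /eqP <-; exact: forward_asymptoticxx.
have [U [clopenU Ux nUy]] := compact_totally_disconnected_zero_dimensional cX tdX xy.
have [L determined] :=
  ellis_inverse_same_side_uniform alpha_cont clopenU beta_ellis alphaK cX.
have [r r0 close_same_side] := compact_nbhs_diagonal_mdist cX
  (fun u => nbhs_diagonal_same_side_upto L u alpha_cont clopenU).
have [n dn] := forward_proximal_lt prox r0.
have window i : (i <= L)%N -> same_side U (iter (i + n) alpha) x y.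
  by move=> iL; rewrite /same_side !iterD; exact: close_same_side dn i iL.
exact/nUy/(same_side_iter_window determined window).
Qed.
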